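(* Let $\{A_n\}_{n\ge1}$ be i.i.d. positive random variables, $X_1=\log A_1$, with $\mathbb EX_1<0$ and $\mathbb E|X_1|^q<\infty$ for some integer $q\ge2$. Let $P$ be the transition kernel on $[0,\infty)$ of the Markov chain $Z_{n+1}=A_{n+1}Z_n+1$, i.e. $PV(x)=\mathbb E[V(A_1x+1)]$, and let $V(x)=(\log x)^q\mathbb 1_{\{x>e\}}+\mathbb 1_{\{x\le e\}}$ for $x\ge0$. Then there exist constants $c>0$, $K<\infty$ and $b<\infty$ such that, with $C=[0,K]$, $$PV(x)\le V(x)-cV(x)^{(q-1)/q}+b\mathbb 1_C(x)\qquad\text{for all }x\ge0.$$ *)

From HB Require Import structures.
From mathcomp Require Import all_boot all_order all_algebra.
From mathcomp Require Import all_classical all_reals all_analysis.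
Set Implicit Arguments. Unset Strict Implicit. Unset Printing Implicit Defensive.
Import Order.TTheory GRing.Theory Num.Theory.
Local Open Scope ring_scope.

Definition Vfun {R : realType} (q : nat) (x : R) : R :=
  if expR 1 < x then (ln x) ^+ q else 1.

Definition PV {R : realType} (d : measure_display) (T : measurableType d)
  (P : probability T R) (A : T -> R) (q : nat) (x : R) : \bar R :=
  (\int[P]_w (Vfun q (A w * x + 1))%:E)%E.

Definition ind01 {R : realType} (K x : R) : R :=
  if (0 <= x) && (x <= K) then 1 else 0.

From HB Require Import structures.
From mathcomp Require Import all_boot all_order all_algebra.
From mathcomp Require Import all_classical all_reals all_analysis.
From mathcomp Require Import ring lra.

Set Implicit Arguments.
Unset Strict Implicit.
Unset Printing Implicit Defensive.

Import Order.TTheory GRing.Theory Num.Theory.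
Local Open Scope ring_scope.

(* Write L = log^+ x and X = log A_1.  Once A_1 x is large, log (A_1 x + 1) is at
   most L + X + δ, and a second-order binomial bound
     (L + y)^q <= L^q + q L^(q-1) y + 2^q (L^(q-2) y^2 + |y|^q)
   makes V(A_1 x + 1) at most a function affine in X and |X|^q whose coefficients
   are polynomials in L.  Taking expectations,
     PV(x) <= L^q + q L^(q-1) (δ + E X) + O(L^(q-2) + 1),
   and for δ small the middle term is at most -2 c L^(q-1) because E X < 0.  For
   large x this drift dominates the remainder, while V(x) = L^q and
   V(x)^((q-1)/q) = L^(q-1); on a compact [0, K] every term is bounded. *)

Section TangentBound.
Variable R : realDomainType.
Implicit Types L y z : R.

Lemma expr_norm_le_1_add y m n : (m <= n)%N ->
  `|y| ^+ m <= 1 + `|y| ^+ n.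
Proof.
move=> mn; have [y1|y1] := lerP `|y| 1.
  by have := exprn_ile1 m (normr_ge0 y) y1; have := exprn_ge0 n (normr_ge0 y); lra.
by have := ler_weXn2l (ltW y1) mn; lra.
Qed.

Lemma mixed_expr_le L y n j : 0 <= L -> 0 <= y -> (j <= n)%N ->
  L ^+ (n - j) * y ^+ j.+2 <= L ^+ n * y ^+ 2 + y ^+ n.+2.
Proof.
move=> L0 y0 jn.
have Ly2 : 0 <= L ^+ n * y ^+ 2 by rewrite mulr_ge0 ?exprn_ge0.
have yn : 0 <= y ^+ n.+2 by rewrite exprn_ge0.
have [yL|Ly] := lerP y L.
- suff : L ^+ (n - j) * y ^+ j.+2 <= L ^+ n * y ^+ 2 by lra.
  rewrite -addn2 exprD mulrA ler_wpM2r ?exprn_ge0 //.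
  by rewrite -{2}(subnK jn) exprD ler_wpM2l ?exprn_ge0 // lerXn2r.
- suff : L ^+ (n - j) * y ^+ j.+2 <= y ^+ n.+2 by lra.
  have -> : y ^+ n.+2 = y ^+ (n - j) * y ^+ j.+2 by rewrite -exprD !addnS subnK.
  by rewrite ler_wpM2r ?exprn_ge0 // lerXn2r // ?nnegrE ltW.
Qed.

(* In the binomial expansion every term of order >= 2 in y is dominated by
   L^n y^2 + |y|^(n+2) (mixed_expr_le), and those binomial coefficients sum to
   less than 2^(n+2). *)
Lemma exprDn_tangent_le L y n : 0 <= L ->
  (L + y) ^+ n.+2 <= L ^+ n.+2 + n.+2%:R * L ^+ n.+1 * y
                     + 2 ^+ n.+2 * (L ^+ n * y ^+ 2 + `|y| ^+ n.+2).
Proof.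
move=> L0; set S := L ^+ n * y ^+ 2 + `|y| ^+ n.+2.
have S0 : 0 <= S := addr_ge0 (mulr_ge0 (exprn_ge0 n L0) (sqr_ge0 y)) (exprn_ge0 _ (normr_ge0 y)).
set C := \sum_(i < n.+1) ('C(n.+2, i.+2))%:R : R.
have two : (2 : R) ^+ n.+2 = 1 + n.+2%:R + C.
  rewrite -[2]/(1 + 1 : R) exprD1n 2!big_ord_recl bin0 bin1 !expr1n mulr1n addrA.
  by congr (_ + _); apply: eq_bigr => i _; rewrite expr1n.
have high : \sum_(i < n.+1) L ^+ (n - i) * y ^+ i.+2 *+ 'C(n.+2, i.+2) <= C * S.
  rewrite mulr_suml; apply: ler_sum => i _; rewrite -mulr_natr mulrC ler_wpM2l //.
  apply: le_trans (ler_norm _) _.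
  rewrite normrM !normrX (ger0_norm L0) /S -[y ^+ 2]real_normK ?num_real //.
  by apply: mixed_expr_le L0 (normr_ge0 y) _; rewrite -ltnS.
rewrite exprDn 2!big_ord_recl /= expr0 mulr1 subn0 expr1 bin0 bin1 mulr1n.
under eq_bigr => i _ do rewrite /bump !add1n !subSS.
rewrite -mulr_natl mulrA two.
have : 0 <= n.+2%:R * S by rewrite mulr_ge0.
lra.
Qed.

(* The same bound holds for the positive part: when L + y < 0 the right-hand
   side is still nonnegative because L^(n+1) |y| <= |y|^(n+2) and n+2 <= 2^(n+2). *)
Lemma exprDn_pos_tangent_le L y n : 0 <= L ->
  Num.max (L + y) 0 ^+ n.+2 <= L ^+ n.+2 + n.+2%:R * L ^+ n.+1 * y
                               + 2 ^+ n.+2 * (L ^+ n * y ^+ 2 + `|y| ^+ n.+2).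
Proof.
move=> L0; have [Ly0|Ly0] := leP 0 (L + y).
  exact: exprDn_tangent_le.
rewrite expr0n /=.
have yL : L <= `|y| by rewrite ltr0_norm; lra.
have Ly : - `|y| ^+ n.+2 <= L ^+ n.+1 * y.
  have -> : L ^+ n.+1 * y = - (L ^+ n.+1 * `|y|) by rewrite ltr0_norm ?mulrN ?opprK //; lra.
  by rewrite exprSr lerN2 ler_wpM2r // lerXn2r ?nnegrE.
have n2 : (n.+2%:R : R) <= 2 ^+ n.+2 by rewrite -natrX ler_nat ltnW // ltn_expl.
have : n.+2%:R * `|y| ^+ n.+2 <= 2 ^+ n.+2 * (L ^+ n * y ^+ 2 + `|y| ^+ n.+2).
  apply: (le_trans (ler_wpM2r (exprn_ge0 _ (normr_ge0 y)) n2)).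
  by rewrite ler_wpM2l ?exprn_ge0 // lerDr (mulr_ge0 (exprn_ge0 n L0) (sqr_ge0 y)).
have : 0 <= L ^+ n.+2 by rewrite exprn_ge0.
have := ler_wpM2l (ler0n _ n.+2) Ly.
rewrite mulrN mulrA; lra.
Qed.

Lemma normD_expr_le y z m : `|z| <= 1 -> `|y + z| ^+ m <= 2 ^+ m * (`|y| ^+ m + 1).
Proof.
move=> z1; have y0 := normr_ge0 y.
have yz : `|y + z| <= `|y| + 1 by apply: le_trans (ler_normD _ _) _; lra.
have two_ym0 : 0 <= 2 ^+ m * `|y| ^+ m by rewrite -exprMn exprn_ge0 ?mulr_ge0.
have two_m0 : (0 : R) <= 2 ^+ m by rewrite exprn_ge0.
have yzm : `|y + z| ^+ m <= (`|y| + 1) ^+ m by rewrite lerXn2r ?nnegrE //; lra.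
apply: le_trans yzm _.
rewrite mulrDr mulr1; have [y1|y1] := lerP `|y| 1.
- have : (`|y| + 1) ^+ m <= 2 ^+ m by rewrite lerXn2r ?nnegrE //; lra.
  lra.
- have : (`|y| + 1) ^+ m <= (2 * `|y|) ^+ m by rewrite lerXn2r ?nnegrE //; lra.
  rewrite exprMn; lra.
Qed.

Lemma tangent_remainder_le L y z n : 0 <= L -> `|z| <= 1 ->
  2 ^+ n.+2 * (L ^+ n * (y + z) ^+ 2 + `|y + z| ^+ n.+2)
    <= (L ^+ n + 1) * (2 ^+ n.+2 * (1 + 2 ^+ n.+2) + 4 ^+ n.+2 * `|y| ^+ n.+2).
Proof.
move=> L0 z1; set u := `|y + z| ^+ n.+2.
have Ln : 0 <= L ^+ n := exprn_ge0 n L0.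
have two0 : (0 : R) <= 2 ^+ n.+2 by rewrite exprn_ge0.
have sq : L ^+ n * (y + z) ^+ 2 <= L ^+ n * (1 + u).
  by rewrite ler_wpM2l // -real_normK ?num_real // expr_norm_le_1_add.
have uy : 1 + u <= 1 + 2 ^+ n.+2 * (`|y| ^+ n.+2 + 1) by rewrite lerD2l normD_expr_le.
have -> : (L ^+ n + 1) * (2 ^+ n.+2 * (1 + 2 ^+ n.+2) + 4 ^+ n.+2 * `|y| ^+ n.+2)
    = 2 ^+ n.+2 * ((L ^+ n + 1) * (1 + 2 ^+ n.+2 * (`|y| ^+ n.+2 + 1))).
  by rewrite (_ : 4 = 2 * 2 :> R) ?exprMn; [ring | lra].
rewrite ler_wpM2l //; apply: le_trans (ler_wpM2l _ uy); last lra.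
rewrite mulrDl mul1r; lra.
Qed.

End TangentBound.

Section LyapunovFunction.
Variable R : realType.
Implicit Types a x u δ : R.

Definition lnp x := Num.max (ln x) 0.

Lemma lnp_ge0 x : 0 <= lnp x.
Proof. by rewrite /lnp le_max lexx orbT. Qed.

Lemma ln_le_lnp x : ln x <= lnp x.
Proof. by rewrite /lnp le_max lexx. Qed.

Lemma lnp_le x K : 0 <= x -> 0 <= K -> x <= expR K -> lnp x <= K.
Proof.
move=> x0 K0 xK; rewrite /lnp ge_max K0 andbT.
have [xp|] := ltP 0 x; first by rewrite -ler_expR lnK.
by rewrite le_eqVlt ltNge x0 orbF => /eqP ->; rewrite ln0.
Qed.

Lemma ln_addr1_le u δ : 0 < δ -> δ^-1 <= u -> ln (u + 1) <= ln u + δ.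
Proof.
move=> δ0 δu; have u0 : 0 < u by apply: lt_le_trans δu; rewrite invr_gt0.
have -> : u + 1 = u * (1 + u^-1) by rewrite mulrDr mulr1 mulfV ?gt_eqF.
rewrite lnM ?posrE ?addr_gt0 ?invr_gt0 // lerD2l.
apply: le_trans (le_ln1Dx _) _; first by apply: lt_le_trans (ltrN10 R) _; rewrite invr_ge0 ltW.
by rewrite -[leRHS]invrK lef_pV2 ?posrE ?invr_gt0.
Qed.

Lemma Vfun_ge1 q x : 1 <= Vfun q x.
Proof.
rewrite /Vfun; case: ifP => // ex; apply: exprn_ege1.
by rewrite -(expRK 1) ler_ln ?posrE ?expR_gt0 ?ltW // (lt_trans _ ex) ?expR_gt0.
Qed.

Lemma Vfun_measurable q : measurable_fun setT (@Vfun R q).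
Proof.
apply: measurable_fun_ifT.
- exact: measurable_realfun.measurable_fun_ltr.
- exact: measurable_realfun.measurable_funX.
- exact: measurable_cst.
Qed.

(* Away from [0, 1/δ] the map u |-> ln (u + 1) is within δ of ln u, so the
   one-step image a x + 1 has log at most lnp x + ln a + δ. *)
Lemma Vfun_le_shift q a x δ : 0 < a -> 0 <= x -> 0 < δ ->
  Vfun q (a * x + 1) <= ln (δ^-1 + 1) ^+ q + 1 + Num.max (lnp x + (ln a + δ)) 0 ^+ q.
Proof.
move=> a0 x0 δ0; set M := Num.max _ 0.
have M0 : 0 <= M ^+ q by rewrite exprn_ge0 // le_max lexx orbT.
have iδ0 : 0 < δ^-1 by rewrite invr_gt0.
have lnB0 : 0 <= ln (δ^-1 + 1) by rewrite ln_ge0 //; lra.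
have B0 : 0 <= ln (δ^-1 + 1) ^+ q by rewrite exprn_ge0.
have ax0 : 0 <= a * x := mulr_ge0 (ltW a0) x0.
rewrite /Vfun; case: ifP => _; last lra.
have lnu0 : 0 <= ln (a * x + 1) by rewrite ln_ge0 //; lra.
suff : ln (a * x + 1) ^+ q <= ln (δ^-1 + 1) ^+ q \/ ln (a * x + 1) ^+ q <= M ^+ q by lra.
have [small|large] := leP (a * x) δ^-1.
  by left; rewrite lerXn2r ?nnegrE // ler_ln ?posrE //; lra.
right; rewrite lerXn2r ?nnegrE ?le_max ?lexx ?orbT //.
have xp : 0 < x by rewrite lt_neqAle x0 andbT; apply: contraTneq large => <-; rewrite mulr0 ltNge ltW.
apply/orP; left; apply: le_trans (ln_addr1_le δ0 (ltW large)) _.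
by rewrite lnM ?posrE //; have := ln_le_lnp x; lra.
Qed.

Lemma Vfun_affine_le n a x δ : 0 < a -> 0 <= x -> 0 < δ <= 1 ->
  Vfun n.+2 (a * x + 1) <= ln (δ^-1 + 1) ^+ n.+2 + 1 + lnp x ^+ n.+2
    + n.+2%:R * lnp x ^+ n.+1 * (ln a + δ)
    + (lnp x ^+ n + 1) * (2 ^+ n.+2 * (1 + 2 ^+ n.+2) + 4 ^+ n.+2 * `|ln a| ^+ n.+2).
Proof.
move=> a0 x0 /andP[δ0 δ1]; apply: le_trans (Vfun_le_shift n.+2 a0 x0 δ0) _.
have := exprDn_pos_tangent_le (ln a + δ) n (lnp_ge0 x).
have δn : `|δ| <= 1 by rewrite ger0_norm ?(ltW δ0).
have := tangent_remainder_le (ln a) n (lnp_ge0 x) δn.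
lra.
Qed.

Lemma powR_exprS (L : R) n : 0 <= L ->
  (L ^+ n.+2) `^ (n.+1%:R / n.+2%:R) = L ^+ n.+1.
Proof.
move=> L0; rewrite -powR_mulrn // -powRrM.
by rewrite mulrC divfK ?pnatr_eq0 // powR_mulrn.
Qed.

(* Beyond x = exp L0 the negative drift - c (ln x)^(n+1) absorbs the lower order
   terms; on [0, exp L0] everything is bounded and paid for by b. *)
Lemma Vfun_drift n (c B E : R) : 0 < c <= 1 -> 0 <= B -> 0 <= E ->
  exists K b : R, forall x, 0 <= x ->
    B + lnp x ^+ n.+2 - 2 * c * lnp x ^+ n.+1 + (lnp x ^+ n + 1) * E
      <= Vfun n.+2 x - c * Vfun n.+2 x `^ (n.+1%:R / n.+2%:R) + b * ind01 K x.
Proof.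
move=> /andP[c0 c1] B0 E0; set L0 := 1 + (B + 2 * E) / c.
have L01 : 1 <= L0 by rewrite lerDl divr_ge0 ?(ltW c0) //; lra.
exists (expR L0), (B + L0 ^+ n.+2 + (L0 ^+ n + 1) * E) => x x0.
have L0x := lnp_ge0 x; set L := lnp x.
have Ln1 : 0 <= L ^+ n.+1 := exprn_ge0 _ L0x.
rewrite /ind01 x0 /=; have [xK|Kx] := leP x (expR L0).
- have LL0 : L <= L0 by apply: lnp_le => //; lra.
  have V1 := Vfun_ge1 n.+2 x.
  have Va : Vfun n.+2 x `^ (n.+1%:R / n.+2%:R) <= Vfun n.+2 x.
    by rewrite ler1_powR // ler_pdivrMr ?ltr0n // mul1r ler_nat.
  have := powR_ge0 (Vfun n.+2 x) (n.+1%:R / n.+2%:R).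
  have : L ^+ n.+2 <= L0 ^+ n.+2 by rewrite lerXn2r ?nnegrE //; lra.
  have : (L ^+ n + 1) * E <= (L0 ^+ n + 1) * E.
    by rewrite ler_wpM2r // lerD2r lerXn2r ?nnegrE //; lra.
  have : 0 <= c * L ^+ n.+1 := mulr_ge0 (ltW c0) Ln1.
  have : c * Vfun n.+2 x `^ (n.+1%:R / n.+2%:R) <= Vfun n.+2 x `^ (n.+1%:R / n.+2%:R).
    by rewrite ler_piMl ?powR_ge0.
  lra.
- have xp : 0 < x := lt_trans (expR_gt0 L0) Kx.
  have L0L : L0 < ln x by rewrite -ltr_expR lnK ?posrE.
  have ex : expR 1 < x by apply: le_lt_trans Kx; rewrite ler_expR.
  have -> : L = ln x by rewrite /L /lnp max_l //; lra.
  have x1 : 1 <= x by apply/ltW/(lt_trans _ ex); rewrite expR_gt1.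
  rewrite mulr0 addr0 /Vfun ex powR_exprS ?ln_ge0 //.
  suff : B + (ln x ^+ n + 1) * E <= c * ln x ^+ n.+1 by lra.
  have Ln : 1 <= ln x ^+ n by rewrite exprn_ege1 //; lra.
  apply: (@le_trans _ _ ((B + 2 * E) * ln x ^+ n)).
    by have := ler_peMr B0 Ln; have := ler_peMr E0 Ln; lra.
  rewrite exprS mulrA; apply: ler_wpM2r; first lra.
  have -> : B + 2 * E = c * (L0 - 1) by rewrite /L0; field; rewrite gt_eqF.
  by rewrite ler_wpM2l ?ltW //; lra.
Qed.

End LyapunovFunction.

Section ExpectationBound.
Context d (T : measurableType d) (R : realType) (P : probability T R).

Lemma integrable_of_expr (f : T -> R) n : measurable_fun setT f ->
  P.-integrable setT (fun w => (`|f w| ^+ n.+1)%:E) -> P.-integrable setT (EFin \o f).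
Proof.
move=> mf ifn.
have i1 : P.-integrable setT (fun w => (1 + `|f w| ^+ n.+1)%:E).
  apply: eq_integrable measurableT _ _ _
    (integrableD measurableT (finite_measure_integrable_cst P 1 measurableT) ifn).
  by move=> w _; rewrite EFinD.
apply: (le_integrable measurableT) i1 => [|w _ /=]; first exact/measurable_realfun.measurable_EFinP.
rewrite lee_fin [leRHS]ger0_norm; last by rewrite addr_ge0 // exprn_ge0.
by have := expr_norm_le_1_add (f w) (isT : (1 <= n.+1)%N); rewrite expr1.
Qed.

Lemma integral_le_affine (f g h : T -> R) (α β γ : R) :
  measurable_fun setT f -> (forall w, 0 <= f w) ->
  P.-integrable setT (EFin \o g) -> P.-integrable setT (EFin \o h) ->
  (forall w, f w <= α + β * g w + γ * h w) ->
  (\int[P]_w (f w)%:E <= (α + β * fine 'E_P[g] + γ * fine 'E_P[h])%:E)%E.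
Proof.
move=> mf f0 ig ih fle; rewrite unlock.
have ic := finite_measure_integrable_cst P α measurableT.
have igZ := integrableZl measurableT β ig.
have ihZ := integrableZl measurableT γ ih.
have eF : (fun w => (α + β * g w + γ * h w)%:E)
    = (fun w => α%:E + β%:E * (g w)%:E + γ%:E * (h w)%:E)%E.
  by apply/funext => w; rewrite !EFinD !EFinM.
have iF : P.-integrable setT (fun w => (α + β * g w + γ * h w)%:E).
  by rewrite eF; apply: integrableD => //; exact: integrableD.
apply: le_trans (ge0_le_integral P measurableT _ _ (measurable_int P iF) _) _.
- by move=> w _; rewrite lee_fin.
- exact/measurable_realfun.measurable_EFinP.
- by move=> w _; rewrite lee_fin.
rewrite eF integralD //; last exact: integrableD.
rewrite integralD // !integralZl //.
rewrite integral_cst // [X in (α%:E * X)%E](_ : _ = 1%E) ?mule1; last exact: probability_setT.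
by rewrite !EFinD !EFinM !fineK ?(integrable_fin_num measurableT ig) ?(integrable_fin_num measurableT ih).
Qed.

Lemma PV_le (A : {RV P >-> R}) n (δ x : R) :
  (forall w, 0 < A w) ->
  P.-integrable setT (fun w => (`|ln (A w)| ^+ n.+2)%:E) ->
  0 < δ <= 1 -> 0 <= x ->
  (PV P A n.+2 x <= (ln (δ^-1 + 1) ^+ n.+2 + 1 + lnp x ^+ n.+2
     + n.+2%:R * lnp x ^+ n.+1 * (δ + fine 'E_P[fun w => ln (A w)])
     + (lnp x ^+ n + 1) * (2 ^+ n.+2 * (1 + 2 ^+ n.+2)
                           + 4 ^+ n.+2 * fine 'E_P[fun w => `|ln (A w)| ^+ n.+2]))%:E)%E.
Proof.
move=> Apos ilnAq hδ x0.
have mA : measurable_fun setT A := measurable_funPT A.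
have mlnA : measurable_fun setT (fun w => ln (A w)).
  exact: measurableT_comp (@measurable_realfun.measurable_ln R) mA.
apply: le_trans (integral_le_affine
  (α := ln (δ^-1 + 1) ^+ n.+2 + 1 + lnp x ^+ n.+2 + n.+2%:R * lnp x ^+ n.+1 * δ
        + (lnp x ^+ n + 1) * (2 ^+ n.+2 * (1 + 2 ^+ n.+2)))
  (β := n.+2%:R * lnp x ^+ n.+1) (γ := (lnp x ^+ n + 1) * 4 ^+ n.+2)
  _ _ (integrable_of_expr mlnA ilnAq) ilnAq _) _.
- apply: measurableT_comp (Vfun_measurable _) _.
  by apply: measurable_realfun.measurable_funD => //; exact: measurable_realfun.measurable_funM.
- by move=> w; exact: le_trans ler01 (Vfun_ge1 _ _).
- by move=> w; have := Vfun_affine_le n (Apos w) x0 hδ; lra.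
- by rewrite lee_fin; lra.
Qed.

End ExpectationBound.

Lemma negative_drift_rate {R : realFieldType} n (μ : R) : μ < 0 ->
  exists2 c : R, 0 < c <= 1 & n.+2%:R * (c + μ) <= - (2 * c).
Proof.
move=> μ0; exists (Num.min 1 (- μ / 2)).
  by rewrite ge_min lexx orTb andbT lt_min ltr01 /=; lra.
have cμ : Num.min 1 (- μ / 2) <= - μ / 2 by rewrite ge_min lexx orbT.
have : (2 : R) <= n.+2%:R by rewrite ler_nat.
nra.
Qed.

Theorem mainTheorem10 (R : realType) (d : measure_display) (T : measurableType d)
  (P : probability T R) (A : {RV P >-> R}) (q : nat)
  (hq : (2 <= q)%N)
  (Apos : forall w, 0 < A w)
  (hint : P.-integrable setT (fun w => (`| ln (A w) | ^+ q)%:E))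
  (hneg : ('E_P[(fun w => ln (A w))] < 0)%E) :
  exists c K b : R, 0 < c /\
    forall x : R, 0 <= x ->
      (PV P A q x <=
        (Vfun q x - c * (Vfun q x) `^ ((q - 1)%:R / q%:R) + b * ind01 K x)%:E)%E.
Proof.
case: q hq hint hneg => [|[|n]] // _ hint hneg; rewrite subSS subn0.
set μ := fine 'E_P[fun w => ln (A w)].
set H := fine 'E_P[fun w => `|ln (A w)| ^+ n.+2].
have μ0 : μ < 0.
  have mlnA := measurableT_comp (@measurable_realfun.measurable_ln R) (measurable_funPT A).
  have /(integrable_fin_num measurableT) := integrable_of_expr mlnA hint.
  by move: hneg; rewrite -lte_fin /μ unlock => /[swap] /fineK ->.
have H0 : 0 <= H by rewrite fine_ge0 // expectation_ge0 // => w; exact: exprn_ge0.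
have [c c01 drift_coef] := negative_drift_rate n μ0.
have [||K [b drift]] := Vfun_drift n (B := ln (c^-1 + 1) ^+ n.+2 + 1)
  (E := 2 ^+ n.+2 * (1 + 2 ^+ n.+2) + 4 ^+ n.+2 * H) c01.
- by rewrite addr_ge0 // exprn_ge0 // ln_ge0 // lerDr invr_ge0 ltW //; case/andP: c01.
- have p4 : (0 : R) <= 4 ^+ n.+2 by rewrite exprn_ge0.
  have p2 : (0 : R) <= 2 ^+ n.+2 by rewrite exprn_ge0.
  by apply: addr_ge0; apply: mulr_ge0 => //; apply: addr_ge0.
exists c, K, b; split; first by case/andP: c01.
move=> x x0; apply: le_trans (PV_le Apos hint c01 x0) _; rewrite lee_fin.
apply: le_trans (drift x x0).
have := ler_wpM2l (exprn_ge0 n.+1 (lnp_ge0 x)) drift_coef.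
rewrite -/μ -/H; lra.
Qed.
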